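(* Let $k \ge 3$ be an integer and $\varepsilon \in (0, 1/12]$. Then \[ d(k,\varepsilon) \ \ge\ \frac{\log\big(r_k(\lfloor \tfrac{1}{12\varepsilon}\rfloor)\big)}{\log\big(12\lfloor \tfrac{1}{12\varepsilon}\rfloor\big)}. \]
   Context: A $k$-term arithmetic progression ($k$AP) is a set $P=\{x, x+\lambda, \dots, x+(k-1)\lambda\}\subset\mathbb{R}$ with $\lambda>0$, called the gap length of $P$. For $N\in\mathbb{N}$, $r_k(N)$ denotes the maximal cardinality of a subset $A\subseteq\{1,\dots,N\}$ that contains no $k$AP. Given $\varepsilon\in(0,1)$, a set $E\subset\mathbb{R}$ is said to $\varepsilon$-avoid $k$APs if for every $k$AP $P$ with gap length $\lambda$ one has $\sup_{p\in P}\inf_{x\in E}|x-p|\ \ge\ \varepsilon\lambda$. Define $d(k,\varepsilon)=\sup\{\dim_H(E): E\subset\mathbb{R} \text{ bounded and } E \ \varepsilon\text{-avoids } k\text{APs}\}$, where $\dim_H$ is Hausdorff dimension. *)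

From Stdlib Require Import Reals Lra Lia List ZArith.
Import ListNotations.
Open Scope R_scope.

(* E eps-avoids kAPs iff for every kAP P with gap lam,
     sup_{p in P} inf_{e in E} |e - p| >= eps*lam.
   Since P is finite, the sup is a max, and inf_{e in E}|e-p| >= c iff every
   e in E has |e-p| >= c (with inf over the empty set = +oo). *)
Definition eps_avoids_kAPs (k : nat) (eps : R) (E : R -> Prop) : Prop :=
  forall x lam : R, 0 < lam ->
    exists i : nat, (i < k)%nat /\
      forall e : R, E e -> eps * lam <= Rabs (e - (x + INR i * lam)).

Definition bounded_set (E : R -> Prop) : Prop :=
  exists M : R, forall x, E x -> Rabs x <= M.

Definition rpow (t s : R) : R := if Req_EM_T t 0 then 0 else Rpower t s.

Definition diam_le (U : R -> Prop) (r : R) : Prop :=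
  forall x y, U x -> U y -> Rabs (x - y) <= r.

(* H^s_delta(E) = 0 : for every eta > 0 there is a countable cover (U_n) of E
   with diam U_n <= delta and sum_n (diam U_n)^s <= eta.  (Covers are recorded
   together with numbers r_n >= diam U_n; taking r_n = diam U_n shows the
   infimum is unchanged.) *)
Definition Hs_delta_null (s delta : R) (E : R -> Prop) : Prop :=
  forall eta : R, 0 < eta ->
    exists (U : nat -> R -> Prop) (r : nat -> R),
      (forall n, 0 <= r n <= delta) /\
      (forall n, diam_le (U n) (r n)) /\
      (forall x, E x -> exists n, U n x) /\
      (forall N, sum_f_R0 (fun n => rpow (r n) s) N <= eta).

(* H^s(E) = lim_{delta -> 0} H^s_delta(E) = sup_delta H^s_delta(E) = 0. *)
Definition Hausdorff_null (s : R) (E : R -> Prop) : Prop :=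
  forall delta : R, 0 < delta -> Hs_delta_null s delta E.

Definition is_dimH (E : R -> Prop) (d : R) : Prop :=
  (forall s, 0 < s -> Hausdorff_null s E -> d <= s) /\
  (forall d', (forall s, 0 < s -> Hausdorff_null s E -> d' <= s) -> d' <= d).

Definition is_d (k : nat) (eps : R) (D : R) : Prop :=
  is_lub (fun t => exists E : R -> Prop,
            bounded_set E /\ eps_avoids_kAPs k eps E /\ is_dimH E t) D.

(* A subset A of naturals contains a kAP.  For k >= 2 a kAP whose points are
   integers has integer gap, so it suffices to use x, lam natural, lam >= 1. *)
Definition contains_kAP (k : nat) (A : nat -> Prop) : Prop :=
  exists x lam : nat, (0 < lam)%nat /\
    forall i : nat, (i < k)%nat -> A (x + i * lam)%nat.

Definition kAP_free_subset (k N : nat) (A : list nat) : Prop :=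
  NoDup A /\ (forall a, In a A -> (1 <= a <= N)%nat) /\
  ~ contains_kAP k (fun a => In a A).

Definition is_rk (k N m : nat) : Prop :=
  (exists A, kAP_free_subset k N A /\ length A = m) /\
  (forall A, kAP_free_subset k N A -> (length A <= m)%nat).

Definition floor_nat (x : R) : nat := Z.to_nat (Int_part x).

(* Let N be the floor of 1/(12 eps), b = 12 N, and A a kAP-free subset of {1, ..., N} of size
   r_k(N). The Cantor set E of all sums sum_j (12 a_j - 6) b^-(j+1) with digits a_j in A consists,
   at each level, of |A| copies of itself scaled by 1/b, sitting in blocks 12/b apart.
   If every point of a kAP of gap lam is within lam/b <= eps lam of E, then either the gap is
   small, all points lie over the same first-level block, and removing the first digit rescales the
   progression by b; or the gap is comparable to the block spacing and the first digits of the
   points form a kAP in A. Iterating, E eps-avoids kAPs. A mass distribution argument on cylinders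
   (with Koenig's lemma supplying compactness) gives dim_H E >= log |A| / log b. *)

From Stdlib Require Import Reals Lra Lia List Arith ZArith Classical ClassicalEpsilon.
From Coquelicot Require Import Coquelicot.
Import ListNotations.
Open Scope R_scope.

Lemma INR_eq_of_close (p q : nat) : Rabs (INR p - INR q) < 1 -> p = q.
Proof.
  intros H. apply Rabs_def2 in H.
  destruct (Nat.lt_trichotomy p q) as [Hl | [He | Hl]]; auto; exfalso;
    apply (le_INR (S _)) in Hl; rewrite S_INR in Hl; lra.
Qed.

(* The junk value [ln 0 = 0] makes this hold for [n = 0] too. *)
Lemma ln_INR_nonpos n : (n <= 1)%nat -> ln (INR n) <= 0.
Proof.
  intros Hn. destruct n as [| [| n]]; simpl; [| rewrite ln_1; lra | lia].
  unfold ln. destruct (Rlt_dec 0 0) as [H0 | _]; [destruct (Rlt_irrefl 0 H0) | lra].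
Qed.

Lemma finite_choice {T : Type} (t0 : T) (P : nat -> T -> Prop) (k : nat) :
  (forall i, (i < k)%nat -> exists t, P i t) ->
  exists f : nat -> T, forall i, (i < k)%nat -> P i (f i).
Proof.
  intros H. exists (fun i => epsilon (inhabits t0) (P i)).
  intros i Hi. apply epsilon_spec, H, Hi.
Qed.

Lemma nat_AP_of_near_AP (f : nat -> nat) (k : nat) (y mu : R) :
  (2 <= k)%nat -> / 2 < mu ->
  (forall i, (i < k)%nat -> Rabs (INR (f i) - (y + INR i * mu)) < / 4) ->
  (f 0 < f 1)%nat /\ forall i, (i < k)%nat -> f i = (f 0 + i * (f 1 - f 0))%nat.
Proof.
  intros Hk Hmu Hf.
  assert (H01 : (f 0 < f 1)%nat).
  { apply INR_lt. pose proof (Hf 0%nat ltac:(lia)) as H0. pose proof (Hf 1%nat ltac:(lia)) as H1.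
    apply Rabs_def2 in H0, H1. simpl in H0, H1. lra. }
  assert (Hsecond : forall i, (S (S i) < k)%nat -> (f (S (S i)) + f i = 2 * f (S i))%nat).
  { intros i Hi. apply INR_eq_of_close. rewrite plus_INR, mult_INR.
    pose proof (Hf i ltac:(lia)) as H0. pose proof (Hf (S i) ltac:(lia)) as H1.
    pose proof (Hf (S (S i)) Hi) as H2. rewrite S_INR in H1. rewrite !S_INR in H2.
    apply Rabs_def2 in H0, H1, H2. apply Rabs_def1; simpl; lra. }
  split; [exact H01 |].
  assert (Hpair : forall i, (S i < k)%nat ->
            f i = (f 0 + i * (f 1 - f 0))%nat /\ f (S i) = (f 0 + S i * (f 1 - f 0))%nat).
  { induction i as [| i IH]; intros Hi; [split; lia |].
    destruct (IH ltac:(lia)) as [IH0 IH1]. split; [exact IH1 |].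
    specialize (Hsecond i Hi). lia. }
  intros [| i] Hi; [lia | apply Hpair, Hi].
Qed.

Fixpoint sum_list {T : Type} (f : T -> R) (l : list T) : R :=
  match l with [] => 0 | x :: l' => f x + sum_list f l' end.

Section SumList.

Context {T : Type}.

Lemma sum_list_nonneg (f : T -> R) l : (forall x, 0 <= f x) -> 0 <= sum_list f l.
Proof. intros Hf. induction l as [| x l IH]; simpl; [lra |]. specialize (Hf x). lra. Qed.

Lemma sum_list_ge_In (f : T -> R) l x : (forall x, 0 <= f x) -> In x l -> f x <= sum_list f l.
Proof.
  intros Hf. induction l as [| y l IH]; simpl; [tauto |]. intros [-> | Hx].
  - pose proof (sum_list_nonneg f l Hf). lra.
  - specialize (IH Hx). specialize (Hf y). lra.
Qed.

Lemma sum_list_le (f g : T -> R) l : (forall x, In x l -> f x <= g x) ->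
  sum_list f l <= sum_list g l.
Proof.
  induction l as [| x l IH]; simpl; intros H; [lra |].
  specialize (IH (fun y Hy => H y (or_intror Hy))). specialize (H x (or_introl eq_refl)). lra.
Qed.

Lemma sum_list_const c (l : list T) : sum_list (fun _ => c) l = INR (length l) * c.
Proof. induction l as [| x l IH]; [simpl; ring |]. cbn [sum_list length]. rewrite IH, S_INR. ring. Qed.

Lemma sum_list_ext_In (f g : T -> R) l : (forall x, In x l -> f x = g x) ->
  sum_list f l = sum_list g l.
Proof.
  induction l as [| x l IH]; simpl; intros H; [reflexivity |].
  rewrite H, IH by auto. reflexivity.
Qed.

Lemma sum_list_map {U : Type} (f : U -> R) (g : T -> U) l :
  sum_list f (map g l) = sum_list (fun x => f (g x)) l.
Proof. induction l as [| x l IH]; simpl; [reflexivity |]. rewrite IH. reflexivity. Qed.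

Lemma sum_list_app (f : T -> R) l l' : sum_list f (l ++ l') = sum_list f l + sum_list f l'.
Proof. induction l as [| x l IH]; simpl; [ring |]. rewrite IH. ring. Qed.

Lemma sum_list_filter (f : T -> R) (p : T -> bool) l :
  sum_list f l = sum_list f (filter p l) + sum_list f (filter (fun x => negb (p x)) l).
Proof. induction l as [| x l IH]; simpl; [ring |]. destruct (p x); simpl; rewrite IH; ring. Qed.

End SumList.

Lemma sum_list_map_seq (f : nat -> R) N : sum_list f (seq 0 (S N)) = sum_f_R0 f N.
Proof.
  induction N as [| N IH]; [simpl; ring |].
  rewrite seq_S, sum_list_app, IH. simpl. ring.
Qed.

Lemma sum_pow_half N : sum_f_R0 (fun n => (/ 2) ^ S (S n)) N = / 2 - (/ 2) ^ S (S N).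
Proof. induction N as [| N IH]; simpl in *; [field |]. rewrite IH. field. Qed.

Definition prefix (w : list nat) (c : nat -> nat) : Prop :=
  forall i, (i < length w)%nat -> nth i w 0%nat = c i.

Lemma prefix_map_seq (c c' : nat -> nat) j :
  prefix (map c (seq 0 j)) c' <-> forall i, (i < j)%nat -> c i = c' i.
Proof.
  unfold prefix. rewrite length_map, length_seq.
  assert (Hnth : forall i, (i < j)%nat -> nth i (map c (seq 0 j)) 0%nat = c i).
  { intros i Hi. rewrite nth_indep with (d' := c 0%nat) by (rewrite length_map, length_seq; exact Hi).
    rewrite map_nth, seq_nth by exact Hi. reflexivity. }
  split; intros H i Hi; rewrite <- H, ?Hnth by exact Hi; auto.
Qed.

Lemma prefix_snoc v c : prefix v c -> prefix (v ++ [c (length v)]) c.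
Proof.
  intros Hv i Hi. rewrite length_app in Hi. simpl in Hi.
  destruct (Nat.lt_ge_cases i (length v)) as [Hlt | Hge].
  - rewrite app_nth1 by exact Hlt. apply Hv, Hlt.
  - replace i with (length v) by lia. rewrite app_nth2, Nat.sub_diag by lia. reflexivity.
Qed.

Definition starts_with (a : nat) (w : list nat) : bool :=
  match w with a' :: _ => Nat.eqb a' a | [] => false end.

Lemma list_common_bound (l : list nat) (P : nat -> nat -> Prop) :
  (forall a n n', P a n -> (n <= n')%nat -> P a n') ->
  (forall a, In a l -> exists n, P a n) -> exists M, forall a, In a l -> P a M.
Proof.
  intros Hmono. induction l as [| a l IH]; intros Hl; [exists 0%nat; intros a [] |].
  destruct IH as [M HM]; [intros; apply Hl; right; auto |].
  destruct (Hl a (or_introl eq_refl)) as [n Hn].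
  exists (Nat.max M n). intros b [<- | Hb].
  - apply (Hmono a n); [exact Hn | lia].
  - apply (Hmono b M); [apply HM, Hb | lia].
Qed.

Lemma filter_starts_with_other a a0 F : a <> a0 ->
  filter (starts_with a) (filter (fun w => negb (starts_with a0 w)) F) = filter (starts_with a) F.
Proof.
  intros Hne. induction F as [| [| x w] F IH]; simpl; auto.
  destruct (Nat.eqb_spec x a0) as [-> | Hx0]; simpl.
  - destruct (Nat.eqb_spec a0 a); [congruence | exact IH].
  - destruct (Nat.eqb x a); rewrite IH; reflexivity.
Qed.

Lemma sum_list_starts_with (f : list nat -> R) (l : list nat) F :
  NoDup l -> (forall w, 0 <= f w) ->
  sum_list (fun a => sum_list f (filter (starts_with a) F)) l <= sum_list f F.
Proof.
  intros Hl Hf. revert F. induction Hl as [| a0 l Ha0 Hl IH]; intros F; simpl.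
  - apply sum_list_nonneg, Hf.
  - rewrite (sum_list_filter f (starts_with a0) F).
    rewrite (sum_list_ext_In _
      (fun a => sum_list f (filter (starts_with a) (filter (fun w => negb (starts_with a0 w)) F)))).
    + specialize (IH (filter (fun w => negb (starts_with a0 w)) F)). lra.
    + intros a Ha. rewrite filter_starts_with_other; [reflexivity |]. intros ->. contradiction.
Qed.

(** * Cylinder covers *)

Definition digit_seq (A : list nat) (c : nat -> nat) : Prop := forall i, In (c i) A.

Section Cylinders.

Variable A : list nat.

Definition covers (F : list (list nat)) : Prop :=
  forall c, digit_seq A c -> exists w, In w F /\ prefix w c.

Definition cylinder_weight (w : list nat) : R := (/ INR (length A)) ^ length w.

Hypothesis A_NoDup : NoDup A.
Hypothesis A_nonempty : A <> [].

Let m_ge_1 : 1 <= INR (length A).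
Proof.
  destruct A as [| a l]; [congruence |]. cbn [length]. rewrite S_INR.
  pose proof (pos_INR (length l)). lra.
Qed.

Let cylinder_weight_nonneg w : 0 <= cylinder_weight w.
Proof. apply pow_le. left. apply Rinv_0_lt_compat. lra. Qed.

Lemma sum_weight_starts_with a F :
  sum_list cylinder_weight (filter (starts_with a) F)
  = / INR (length A) * sum_list cylinder_weight (map (@tl nat) (filter (starts_with a) F)).
Proof.
  induction F as [| [| a' w] F IH]; simpl; [ring | exact IH |].
  destruct (Nat.eqb a' a); simpl; rewrite IH; [unfold cylinder_weight; simpl; ring | reflexivity].
Qed.

Let digit_in_A : exists a, In a A.
Proof. destruct A as [| a l]; [congruence | exists a; left; reflexivity]. Qed.

Lemma covers_tails a F : In a A -> ~ In [] F -> covers F ->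
  covers (map (@tl nat) (filter (starts_with a) F)).
Proof.
  intros Ha Hnil HF c Hc.
  destruct (HF (fun i => match i with O => a | S i => c i end)) as [w [Hw Hpre]].
  { intros [| i]; [exact Ha | apply Hc]. }
  destruct w as [| a' w]; [contradiction |].
  assert (a' = a) by (apply (Hpre 0%nat); simpl; lia). subst a'.
  exists w. split.
  - apply in_map_iff. exists (a :: w). split; [reflexivity |].
    apply filter_In. split; [exact Hw | apply Nat.eqb_refl].
  - intros i Hi. apply (Hpre (S i)). simpl; lia.
Qed.

(* Induction on the maximal word length: for each letter [a], the tails of the words of [F]
   starting with [a] cover again and carry [1 / length A] of their weight. *)
Lemma covers_weight_ge_1_bounded L : forall F, (forall w, In w F -> (length w <= L)%nat) ->
  covers F -> 1 <= sum_list cylinder_weight F.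
Proof.
  induction L as [| L IH]; intros F HL HF;
    (destruct (in_dec (list_eq_dec Nat.eq_dec) [] F) as [Hnil | Hnil];
     [change 1 with (cylinder_weight []); apply sum_list_ge_In; auto |]).
  - exfalso. destruct digit_in_A as [a Ha].
    destruct (HF (fun _ => a) (fun _ => Ha)) as [w [Hw _]].
    specialize (HL w Hw). destruct w; [contradiction | simpl in HL; lia].
  - apply Rle_trans with (sum_list (fun _ => / INR (length A)) A).
    { rewrite sum_list_const, Rinv_r; lra. }
    eapply Rle_trans; [| apply (sum_list_starts_with _ A F A_NoDup cylinder_weight_nonneg)].
    apply sum_list_le. intros a Ha. rewrite sum_weight_starts_with.
    rewrite <- (Rmult_1_r (/ INR (length A))) at 1.
    apply Rmult_le_compat_l; [left; apply Rinv_0_lt_compat; lra |].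
    apply IH; [| apply covers_tails; auto].
    intros w' Hw'. apply in_map_iff in Hw'. destruct Hw' as [w [<- Hw]].
    apply filter_In in Hw. destruct Hw as [Hw _]. specialize (HL w Hw).
    destruct w; simpl in *; lia.
Qed.

Lemma covers_weight_ge_1 F : covers F -> 1 <= sum_list cylinder_weight F.
Proof.
  apply (covers_weight_ge_1_bounded (list_max (map (@length nat) F))).
  intros w Hw. assert (Hmax := proj1 (list_max_le (map (@length nat) F) _) (le_n _)).
  rewrite Forall_forall in Hmax. apply Hmax, in_map, Hw.
Qed.

Lemma infinite_branch (P : list nat -> Prop) : P [] ->
  (forall v, P v -> exists a, In a A /\ P (v ++ [a])) ->
  exists c, digit_seq A c /\ forall j, P (map c (seq 0 j)).
Proof.
  intros H0 Hstep.
  set (next v := epsilon (inhabits 0%nat) (fun a => In a A /\ P (v ++ [a]))).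
  assert (Hnext : forall v, P v -> In (next v) A /\ P (v ++ [next v]))
    by (intros v Hv; apply epsilon_spec, Hstep, Hv).
  set (path := fix path j := match j with O => [] | S j => path j ++ [next (path j)] end).
  set (c j := next (path j)).
  assert (Hpath : forall j, path j = map c (seq 0 j) /\ P (path j)).
  { induction j as [| j [Hj HPj]]; [split; [reflexivity | exact H0] |].
    change (path (S j)) with (path j ++ [next (path j)]). split.
    - rewrite seq_S, map_app, <- Hj. reflexivity.
    - apply Hnext, HPj. }
  exists c. split.
  - intros j. apply Hnext, Hpath.
  - intros j. rewrite <- (proj1 (Hpath j)). apply Hpath.
Qed.

Definition uncovered (w : nat -> list nat) (N : nat) (v : list nat) : Prop :=
  exists c, digit_seq A c /\ prefix v c /\ forall n, (n <= N)%nat -> ~ prefix (w n) c.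

Lemma uncovered_extend w v : (forall N, uncovered w N v) ->
  exists a, In a A /\ forall N, uncovered w N (v ++ [a]).
Proof.
  intros Hv. apply NNPP. intros Hno.
  destruct (list_common_bound A (fun a N => ~ uncovered w N (v ++ [a]))) as [M HM].
  - intros a n n' Hn Hle (c & Hc & Hpre & Hnot). apply Hn.
    exists c. split; [exact Hc |]. split; [exact Hpre |]. intros n'' Hn''. apply Hnot. lia.
  - intros a Ha. apply NNPP. intros Hall. apply Hno. exists a. split; [exact Ha |].
    intros N. apply NNPP. intros HN. apply Hall. exists N. exact HN.
  - destruct (Hv M) as (c & Hc & Hpre & Hnot). apply (HM (c (length v)) (Hc _)).
    exists c. split; [exact Hc |]. split; [apply prefix_snoc, Hpre | exact Hnot].
Qed.

(* Koenig's lemma for the finitely branching tree of words over [A]. *)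
Lemma finite_subcover (w : nat -> list nat) :
  (forall c, digit_seq A c -> exists n, prefix (w n) c) ->
  exists N, forall c, digit_seq A c -> exists n, (n <= N)%nat /\ prefix (w n) c.
Proof.
  intros Hcov. apply NNPP. intros Hno.
  destruct (infinite_branch (fun v => forall N, uncovered w N v)) as (c & Hc & Hbranch).
  - intros N. apply NNPP. intros HN. apply Hno. exists N. intros c Hc.
    apply NNPP. intros Hc'. apply HN. exists c. split; [exact Hc |].
    split; [intros i Hi; simpl in Hi; lia |]. intros n Hn Hp. apply Hc'. exists n. auto.
  - apply uncovered_extend.
  - destruct (Hcov c Hc) as [n Hn].
    destruct (Hbranch (length (w n)) n) as (c' & _ & Hpre & Hnot).
    apply (Hnot n (le_n n)). intros i Hi. rewrite (Hn i Hi).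
    exact (proj1 (prefix_map_seq c c' _) Hpre i Hi).
Qed.

End Cylinders.

(** * The digit set *)

Definition digit (a : nat) : R := 12 * INR a - 6.

Definition expansion (b : R) (c : nat -> nat) : R :=
  Series (fun j => digit (c j) * (/ b) ^ S j).

Definition digit_set (b : R) (A : list nat) (x : R) : Prop :=
  exists c, digit_seq A c /\ x = expansion b c.

Section DigitSet.

Variables (b : R) (A : list nat).
Hypothesis b_ge_12 : 12 <= b.
Hypothesis digits_A : forall a, In a A -> (1 <= a)%nat /\ 12 * INR a <= b.

Let inv_b_pos : 0 < / b.
Proof. apply Rinv_0_lt_compat; lra. Qed.

Let inv_b_lt_1 : / b < 1.
Proof. rewrite <- Rinv_1. apply Rinv_lt_contravar; lra. Qed.

Lemma digit_range a : In a A -> 0 <= digit a <= b - 1.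
Proof.
  intros Ha. destruct (digits_A a Ha) as [H1 H2].
  apply le_INR in H1. unfold digit. simpl in H1. lra.
Qed.

Lemma is_series_digit_max : is_series (fun j => (b - 1) * (/ b) ^ S j) 1.
Proof.
  assert (H := is_series_geom (/ b) ltac:(rewrite Rabs_pos_eq; lra)).
  apply (is_series_scal_l ((b - 1) / b)) in H.
  replace 1 with ((b - 1) / b * / (1 - / b)) by (field; lra).
  eapply is_series_ext; [| exact H]. intros n. simpl. unfold scal; simpl.
  unfold mult; simpl. field. lra.
Qed.

Lemma expansion_term_range c j : digit_seq A c ->
  0 <= digit (c j) * (/ b) ^ S j <= (b - 1) * (/ b) ^ S j.
Proof.
  intros Hc. destruct (digit_range _ (Hc j)).
  assert (0 < (/ b) ^ S j) by (apply pow_lt; lra).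
  split; [apply Rmult_le_pos | apply Rmult_le_compat_r]; lra.
Qed.

Lemma ex_series_expansion c : digit_seq A c ->
  ex_series (fun j => digit (c j) * (/ b) ^ S j).
Proof.
  intros Hc.
  apply (@ex_series_le R_AbsRing R_CompleteNormedModule _ (fun j => (b - 1) * (/ b) ^ S j)).
  - intros n. destruct (expansion_term_range c n Hc).
    change (norm _) with (Rabs (digit (c n) * (/ b) ^ S n)). rewrite Rabs_pos_eq; lra.
  - eexists. apply is_series_digit_max.
Qed.

Lemma expansion_range c : digit_seq A c -> 0 <= expansion b c <= 1.
Proof.
  intros Hc. unfold expansion. split.
  - rewrite <- (Rmult_0_l (Series (fun j => digit (c j) * (/ b) ^ S j))), <- Series_scal_l.
    apply Series_le.
    + intros n. destruct (expansion_term_range c n Hc). lra.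
    + apply ex_series_expansion, Hc.
  - rewrite <- (is_series_unique _ _ is_series_digit_max). apply Series_le.
    + intros n. apply expansion_term_range, Hc.
    + eexists. apply is_series_digit_max.
Qed.

Lemma expansion_shift c : digit_seq A c ->
  b * expansion b c = digit (c 0%nat) + expansion b (fun i => c (S i)).
Proof.
  intros Hc. unfold expansion.
  rewrite Series_incr_1 by (apply ex_series_expansion, Hc).
  rewrite (Series_ext _ (fun j => / b * (digit (c (S j)) * (/ b) ^ S j)))
    by (intros n; simpl; ring).
  rewrite Series_scal_l. simpl. field. lra.
Qed.

Lemma digit_set_range x : digit_set b A x -> 0 <= x <= 1.
Proof. intros [c [Hc ->]]. apply expansion_range, Hc. Qed.

Lemma digit_set_shift x : digit_set b A x ->
  exists a e, In a A /\ digit_set b A e /\ b * x = digit a + e.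
Proof.
  intros [c [Hc ->]]. exists (c 0%nat), (expansion b (fun i => c (S i))).
  split; [apply Hc |]. split; [exists (fun i => c (S i)); split; [intro; apply Hc | auto] |].
  apply expansion_shift, Hc.
Qed.

(* The digits 12 a - 6 are 12 apart while tails lie in [0, 1]: close points share digits. *)
Lemma expansion_close_prefix j c c' : digit_seq A c -> digit_seq A c' ->
  Rabs (expansion b c - expansion b c') <= (/ b) ^ j ->
  forall i, (i < j)%nat -> c i = c' i.
Proof.
  revert c c'. induction j as [| j IH]; intros c c' Hc Hc' Hd i Hi; [lia |].
  assert (Hbd : Rabs (b * expansion b c - b * expansion b c') <= (/ b) ^ j).
  { rewrite <- Rmult_minus_distr_l, Rabs_mult, (Rabs_pos_eq b) by lra.
    apply (Rmult_le_compat_l b) in Hd; [| lra].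
    simpl in Hd. rewrite <- Rmult_assoc, Rinv_r, Rmult_1_l in Hd by lra. exact Hd. }
  assert (Hpow : (/ b) ^ j <= 1) by (rewrite <- (pow1 j); apply pow_incr; lra).
  rewrite (expansion_shift c Hc), (expansion_shift c' Hc') in Hbd.
  destruct (expansion_range (fun i => c (S i)) (fun i => Hc (S i))).
  destruct (expansion_range (fun i => c' (S i)) (fun i => Hc' (S i))).
  assert (Hhead : c 0%nat = c' 0%nat).
  { apply INR_eq_of_close. unfold digit in Hbd.
    apply Rabs_le_between in Hbd. apply Rabs_def1; lra. }
  destruct i as [| i]; [exact Hhead |].
  apply (IH (fun i => c (S i)) (fun i => c' (S i))); [intro; apply Hc | intro; apply Hc' | | lia].
  rewrite Hhead in Hbd. replace (expansion b _ - expansion b _) with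
    (digit (c' 0%nat) + expansion b (fun i => c (S i))
     - (digit (c' 0%nat) + expansion b (fun i => c' (S i)))) by ring.
  exact Hbd.
Qed.

(** * Avoiding progressions *)

Definition near_AP (k : nat) (x lam : R) : Prop :=
  forall i, (i < k)%nat ->
    exists e, digit_set b A e /\ Rabs (e - (x + INR i * lam)) < lam / b.

Lemma near_digit e p lam : digit_set b A e -> Rabs (e - p) < lam / b ->
  exists a e', In a A /\ digit_set b A e' /\ Rabs (digit a + e' - b * p) < lam.
Proof.
  intros He Hd. destruct (digit_set_shift e He) as (a & e' & Ha & He' & Hbe).
  exists a, e'. split; [exact Ha |]. split; [exact He' |].
  rewrite <- Hbe, <- Rmult_minus_distr_l, Rabs_mult, (Rabs_pos_eq b) by lra.
  apply (Rmult_lt_compat_l b) in Hd; [| lra].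
  replace (b * (lam / b)) with lam in Hd by (field; lra). exact Hd.
Qed.

Lemma digit_eq_of_near a a' e e' y y' lam :
  digit_set b A e -> digit_set b A e' ->
  Rabs (digit a + e - y) < lam -> Rabs (digit a' + e' - y') < lam ->
  Rabs (y - y') + 2 * lam <= 11 -> a = a'.
Proof.
  intros He He' Hd Hd' Hy.
  apply digit_set_range in He, He'.
  assert (Hyy : Rabs (y - y') <= 11 - 2 * lam) by lra.
  apply Rabs_le_between in Hyy. apply Rabs_def2 in Hd, Hd'.
  apply INR_eq_of_close. unfold digit in *. apply Rabs_def1; lra.
Qed.

Lemma not_near_AP_gap_ge_1 k x lam : (3 <= k)%nat -> 1 <= lam -> ~ near_AP k x lam.
Proof.
  intros Hk Hl HN.
  destruct (HN 0%nat ltac:(lia)) as [e0 [He0 Hd0]].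
  destruct (HN 2%nat ltac:(lia)) as [e2 [He2 Hd2]].
  apply digit_set_range in He0, He2. simpl in Hd0, Hd2.
  assert (lam / b <= lam / 12).
  { apply Rmult_le_compat_l; [lra | apply Rinv_le_contravar; lra]. }
  apply Rabs_def2 in Hd0, Hd2. lra.
Qed.

(* After scaling by [b], point [i] lies within [lam < 1] of a block [[12 a_i - 6, 12 a_i - 5]],
   which pins down [a_i]; the [a_i] then form a kAP in [A]. *)
Lemma not_near_AP_medium_gap k x lam : (3 <= k)%nat ->
  ~ contains_kAP k (fun a => In a A) -> lam < 1 -> 11 < lam * (b + 2) ->
  ~ near_AP k x lam.
Proof.
  intros Hk HA Hl1 Hl HN. apply HA.
  set (y := (b * x + 11 / 2) / 12).
  assert (Hdig : forall i, (i < k)%nat -> exists a,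
            In a A /\ Rabs (INR a - (y + INR i * (b * lam / 12))) < / 4).
  { intros i Hi. destruct (HN i Hi) as [e [He Hd]].
    destruct (near_digit _ _ _ He Hd) as (a & e' & Ha & He' & Had).
    exists a. split; [exact Ha |]. apply digit_set_range in He'.
    unfold digit, y in *. apply Rabs_def2 in Had. apply Rabs_def1; lra. }
  destruct (finite_choice 0%nat _ k Hdig) as [f Hf].
  destruct (nat_AP_of_near_AP f k y (b * lam / 12)) as [H01 Hap].
  - lia.
  - lra.
  - intros i Hi. apply Hf, Hi.
  - exists (f 0%nat), (f 1%nat - f 0%nat)%nat. split; [lia |].
    intros i Hi. rewrite <- (Hap i Hi). apply Hf, Hi.
Qed.

Lemma not_near_AP_large_gap k x lam : (3 <= k)%nat ->
  ~ contains_kAP k (fun a => In a A) -> 11 < lam * (b + 2) -> ~ near_AP k x lam.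
Proof.
  intros Hk HA Hl. destruct (Rlt_or_le lam 1).
  - apply not_near_AP_medium_gap; auto.
  - apply not_near_AP_gap_ge_1; auto.
Qed.

(* At a small scale all points sit over the same digit block, and removing that
   digit multiplies the progression (and its gap) by b. *)
Lemma near_AP_rescale k x lam : 0 < lam -> lam * (b + 2) <= 11 -> near_AP k x lam ->
  exists x', near_AP k x' (b * lam).
Proof.
  intros Hl Hsmall HN. destruct k as [| k]; [exists x; intros i Hi; lia |].
  destruct (HN 0%nat ltac:(lia)) as [e0 [He0 Hd0]].
  destruct (near_digit _ _ _ He0 Hd0) as (a0 & e0' & _ & He0' & Hd0').
  assert (Hconst : forall i, (i < S k)%nat -> forall a e, digit_set b A e ->
            Rabs (digit a + e - b * (x + INR i * lam)) < lam -> a = a0).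
  { induction i as [| i IH]; intros Hi a e He Hd.
    - apply (digit_eq_of_near _ _ _ _ _ _ _ He He0' Hd Hd0').
      rewrite Rminus_diag, Rabs_R0. nra.
    - destruct (HN i ltac:(lia)) as [e1 [He1 Hd1]].
      destruct (near_digit _ _ _ He1 Hd1) as (a1 & e1' & _ & He1' & Hd1').
      rewrite <- (IH ltac:(lia) a1 e1' He1' Hd1').
      apply (digit_eq_of_near _ _ _ _ _ _ _ He He1' Hd Hd1').
      replace (b * (x + INR (S i) * lam) - b * (x + INR i * lam)) with (b * lam)
        by (rewrite S_INR; ring).
      rewrite Rabs_pos_eq by nra. lra. }
  exists (b * x - digit a0). intros i Hi.
  destruct (HN i Hi) as [e [He Hd]].
  destruct (near_digit _ _ _ He Hd) as (a & e' & _ & He' & Hd').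
  exists e'. split; [exact He' |].
  rewrite (Hconst i Hi a e' He' Hd') in Hd'.
  replace (b * lam / b) with lam by (field; lra).
  replace (e' - (b * x - digit a0 + INR i * (b * lam)))
    with (digit a0 + e' - b * (x + INR i * lam)) by ring.
  exact Hd'.
Qed.

Lemma not_near_AP k n x lam : (3 <= k)%nat -> ~ contains_kAP k (fun a => In a A) ->
  0 < lam -> 11 < lam * (b + 2) * b ^ n -> ~ near_AP k x lam.
Proof.
  intros Hk HA. revert x lam.
  induction n as [| n IH]; intros x lam Hl Hn HN.
  - apply (not_near_AP_large_gap k x lam Hk HA); [lra | exact HN].
  - destruct (Rle_or_lt (lam * (b + 2)) 11) as [Hs | Hlarge].
    + destruct (near_AP_rescale k x lam Hl Hs HN) as [x' HN'].
      apply (IH x' (b * lam)); [nra | simpl in Hn; lra | exact HN'].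
    + exact (not_near_AP_large_gap k x lam Hk HA Hlarge HN).
Qed.

Lemma digit_set_avoids_kAPs k eps : (3 <= k)%nat -> ~ contains_kAP k (fun a => In a A) ->
  0 < eps -> eps * b <= 1 -> eps_avoids_kAPs k eps (digit_set b A).
Proof.
  intros Hk HA Heps0 Heb x lam Hl.
  destruct (Pow_x_infinity b ltac:(rewrite Rabs_pos_eq; lra) (12 / (lam * (b + 2))))
    as [n Hn].
  specialize (Hn n (le_n n)). rewrite Rabs_pos_eq in Hn by (apply pow_le; lra).
  assert (Hbig : 11 < lam * (b + 2) * b ^ n).
  { apply (Rmult_ge_compat_l (lam * (b + 2))) in Hn; [| nra].
    replace (lam * (b + 2) * (12 / (lam * (b + 2)))) with 12 in Hn by (field; nra). lra. }
  assert (Heps : eps * lam <= lam / b).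
  { apply (Rmult_le_reg_l b); [lra |]. replace (b * (lam / b)) with lam by (field; lra). nra. }
  apply NNPP. intros Hfar. apply (not_near_AP k n x lam Hk HA Hl Hbig).
  intros i Hi. apply NNPP. intros Hno. apply Hfar. exists i. split; [exact Hi |].
  intros e He. apply Rnot_lt_le. intros Hlt. apply Hno. exists e. split; [exact He | lra].
Qed.

(** * The dimension bound *)

Lemma pow_inv_bracket r : 0 < r <= 1 -> exists j, (/ b) ^ S j < r <= (/ b) ^ j.
Proof.
  intros Hr.
  destruct (pow_lt_1_zero (/ b) ltac:(rewrite Rabs_pos_eq; lra) r ltac:(lra)) as [J HJ].
  specialize (HJ J (le_n J)). rewrite Rabs_pos_eq in HJ by (apply pow_le; lra).
  induction J as [| J IH]; [simpl in HJ; lra |].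
  destruct (Rlt_or_le ((/ b) ^ J) r) as [H | H]; [apply IH, H | exists J; lra].
Qed.

(* With [s] below the similarity dimension [ln m / ln b], a set of diameter about [b^-j]
   has [r^s] much larger than the weight [m^-j] of a cylinder of length [j]. *)
Lemma pow_inv_le_rpow m s r j : 0 < m -> 0 < s -> s < ln m / ln b ->
  (/ b) ^ S j < r -> r <= 1 -> (/ m) ^ j <= m * rpow r s.
Proof.
  intros Hm Hs Hst Hr Hr1.
  assert (Hlb : 0 < ln b) by (rewrite <- ln_1; apply ln_increasing; lra).
  assert (Hpos : 0 < (/ b) ^ S j) by (apply pow_lt; lra).
  assert (Hlr : - (INR j + 1) * ln b < ln r).
  { replace (- (INR j + 1) * ln b) with (ln ((/ b) ^ S j))
      by (rewrite ln_pow, ln_Rinv, S_INR by lra; ring).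
    apply ln_increasing; lra. }
  assert (Hlr1 : ln r <= 0).
  { rewrite <- ln_1. destruct (Req_dec r 1) as [-> | Hne]; [lra |].
    left. apply ln_increasing; lra. }
  set (tau := ln m / ln b) in *.
  assert (Htau : ln m = tau * ln b) by (unfold tau; field; lra).
  unfold rpow. destruct (Req_EM_T r 0) as [| _]; [lra |]. unfold Rpower.
  rewrite <- (exp_ln m) at 2 by lra.
  rewrite <- exp_plus, <- (exp_ln ((/ m) ^ j)) by (apply pow_lt, Rinv_0_lt_compat; lra).
  rewrite ln_pow, ln_Rinv by (try apply Rinv_0_lt_compat; lra).
  left. apply exp_increasing.
  assert ((tau - s) * ln r <= 0) by nra.
  assert (tau * (- (INR j + 1) * ln b) < tau * ln r) by (apply Rmult_lt_compat_l; lra).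
  nra.
Qed.

Lemma small_set_in_cylinder (U : R -> Prop) r j : diam_le U r -> r <= (/ b) ^ j ->
  exists w, length w = j /\ forall c, digit_seq A c -> U (expansion b c) -> prefix w c.
Proof.
  intros HU Hr.
  destruct (classic (exists c0, digit_seq A c0 /\ U (expansion b c0)))
    as [[c0 [Hc0 HU0]] | Hnone].
  - exists (map c0 (seq 0 j)). split; [rewrite length_map, length_seq; reflexivity |].
    intros c Hc HUc. apply prefix_map_seq. intros i Hi.
    apply (expansion_close_prefix j c0 c Hc0 Hc); [| exact Hi].
    specialize (HU _ _ HU0 HUc). lra.
  - exists (repeat 0%nat j). split; [apply repeat_length |].
    intros c Hc HUc. exfalso. apply Hnone. exists c. auto.
Qed.

Lemma small_set_in_light_cylinder (U : R -> Prop) r s n :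
  (1 < length A)%nat -> 0 < s -> s < ln (INR (length A)) / ln b ->
  0 <= r <= 1 -> diam_le U r ->
  exists w, cylinder_weight A w <= INR (length A) * rpow r s + (/ 2) ^ S (S n) /\
            forall c, digit_seq A c -> U (expansion b c) -> prefix w c.
Proof.
  intros Hm Hs Hst Hr HU. unfold cylinder_weight.
  apply (le_INR 2) in Hm. simpl in Hm.
  assert (Hhalf : 0 < (/ 2) ^ S (S n)) by (apply pow_lt; lra).
  destruct (Req_dec r 0) as [Hr0 | Hr0].
  - destruct (small_set_in_cylinder U r (S (S n)) HU) as (w & Hlen & Hw).
    { rewrite Hr0. apply pow_le. lra. }
    exists w. split; [| exact Hw]. rewrite Hlen, Hr0.
    unfold rpow. destruct (Req_EM_T 0 0) as [_ | ]; [| congruence].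
    assert ((/ INR (length A)) ^ S (S n) <= (/ 2) ^ S (S n)).
    { apply pow_incr. split; [left; apply Rinv_0_lt_compat; lra |].
      apply Rinv_le_contravar; lra. }
    lra.
  - destruct (pow_inv_bracket r ltac:(lra)) as (j & Hj1 & Hj2).
    destruct (small_set_in_cylinder U r j HU Hj2) as (w & Hlen & Hw).
    exists w. split; [| exact Hw]. rewrite Hlen.
    pose proof (pow_inv_le_rpow (INR (length A)) s r j ltac:(lra) Hs Hst Hj1 ltac:(lra)).
    lra.
Qed.

(* Mass distribution: a null cover would yield finitely many cylinders of total weight < 1. *)
Lemma digit_set_dim_ge s : NoDup A -> 0 < s -> Hausdorff_null s (digit_set b A) ->
  ln (INR (length A)) / ln b <= s.
Proof.
  intros HD Hs Hnull.
  assert (Hlb : 0 < ln b) by (rewrite <- ln_1; apply ln_increasing; lra).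
  destruct (Nat.le_gt_cases (length A) 1) as [Hm1 | Hm1].
  - pose proof (ln_INR_nonpos _ Hm1).
    unfold Rdiv. assert (0 < / ln b) by (apply Rinv_0_lt_compat; lra). nra.
  - apply Rnot_lt_le. intros Hst. set (m := INR (length A)) in *.
    assert (Hm : 1 < m) by (apply lt_INR in Hm1; exact Hm1).
    destruct (Hnull 1 Rlt_0_1 (/ (4 * m)) ltac:(apply Rinv_0_lt_compat; lra))
      as (U & r & Hr & Hdiam & Hcov & Hsum).
    destruct (choice _ (fun n =>
      small_set_in_light_cylinder (U n) (r n) s n Hm1 Hs Hst (Hr n) (Hdiam n))) as [w Hw].
    destruct (finite_subcover A w) as [N HN].
    { intros c Hc. destruct (Hcov (expansion b c)) as [n Hn]; [exists c; auto |].
      exists n. apply Hw; auto. }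
    assert (Hmass : 1 <= sum_list (cylinder_weight A) (map w (seq 0 (S N)))).
    { apply covers_weight_ge_1; [exact HD | intros HA; rewrite HA in Hm1; simpl in Hm1; lia |].
      intros c Hc. destruct (HN c Hc) as (n & Hn & Hp).
      exists (w n). split; [apply in_map, in_seq; lia | exact Hp]. }
    rewrite sum_list_map, sum_list_map_seq in Hmass.
    assert (Hle : sum_f_R0 (fun n => cylinder_weight A (w n)) N
                  <= sum_f_R0 (fun n => rpow (r n) s * m + (/ 2) ^ S (S n)) N).
    { apply sum_Rle. intros n _. destruct (Hw n) as [Hwn _]. fold m in Hwn. lra. }
    rewrite sum_plus, <- scal_sum, sum_pow_half in Hle.
    specialize (Hsum N).
    assert (Hsum_m : m * sum_f_R0 (fun n => rpow (r n) s) N <= m * / (4 * m))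
      by (apply Rmult_le_compat_l; lra).
    replace (m * / (4 * m)) with (/ 4) in Hsum_m by (field; lra).
    assert (0 < (/ 2) ^ S (S N)) by (apply pow_lt; lra).
    lra.
Qed.

End DigitSet.

(** * Existence of the Hausdorff dimension *)

Lemma nat_interval_cover K y : 0 <= y <= INR K ->
  exists n, (n <= K)%nat /\ INR n <= y <= INR n + 1.
Proof.
  induction K as [| K IH]; intros Hy; [exists 0%nat; simpl in *; split; [lia | lra] |].
  destruct (Rle_or_lt y (INR K)) as [H | H].
  - destruct IH as (n & Hn & Hy'); [lra |]. exists n. split; [lia | exact Hy'].
  - exists K. rewrite S_INR in Hy. split; [lia | lra].
Qed.

Lemma sum_indicator_le M q N : 0 <= q ->
  sum_f_R0 (fun n => if le_dec n M then q else 0) N <= INR (S M) * q.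
Proof.
  intros Hq. enough (Hsum : sum_f_R0 (fun n => if le_dec n M then q else 0) N
                            = INR (Nat.min (S N) (S M)) * q).
  { rewrite Hsum. apply Rmult_le_compat_r; [exact Hq | apply le_INR; lia]. }
  induction N as [| N IH]; simpl sum_f_R0.
  - destruct (le_dec 0 M); [simpl; ring | lia].
  - rewrite IH. destruct (le_dec (S N) M).
    + rewrite !Nat.min_l by lia. rewrite (S_INR (S N)). ring.
    + rewrite !Nat.min_r by lia. ring.
Qed.

Lemma unit_interval_subset_null2 (E : R -> Prop) :
  (forall x, E x -> 0 <= x <= 1) -> Hausdorff_null 2 E.
Proof.
  intros HE delta Hdelta eta Heta.
  destruct (archimed_cor1 (Rmin delta (eta / 2)) ltac:(apply Rmin_pos; lra)) as [M [HM HM0]].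
  set (h := / INR M) in *.
  pose proof (Rmin_l delta (eta / 2)). pose proof (Rmin_r delta (eta / 2)).
  assert (HMpos : 1 <= INR M) by (apply (le_INR 1); lia).
  assert (Hh : 0 < h) by (apply Rinv_0_lt_compat; lra).
  assert (HhM : h * INR M = 1) by (apply Rinv_l; lra).
  exists (fun n x => (n <= M)%nat /\ INR n * h <= x <= (INR n + 1) * h).
  exists (fun n => if le_dec n M then h else 0).
  split; [| split; [| split]].
  - intros n. destruct (le_dec n M); lra.
  - intros n x y [Hn Hx] [_ Hy]. destruct (le_dec n M); [apply Rabs_le; lra | lia].
  - intros x Hx. specialize (HE x Hx).
    destruct (nat_interval_cover M (x * INR M)) as (n & Hn & Hxn); [nra |].
    exists n. split; [exact Hn |].
    replace x with (x * INR M * h) by (rewrite Rmult_assoc, (Rmult_comm (INR M)), HhM; ring).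
    split; apply Rmult_le_compat_r; lra.
  - intros N.
    rewrite (sum_eq _ (fun n => if le_dec n M then h ^ 2 else 0)).
    + eapply Rle_trans; [apply sum_indicator_le; nra |]. rewrite S_INR.
      replace ((INR M + 1) * h ^ 2) with (h + h * h) by (unfold h; field; lra).
      assert (h * h <= h) by nra. lra.
    + intros n _. unfold rpow. destruct (le_dec n M).
      * destruct (Req_EM_T h 0); [lra |]. replace 2 with (INR 2) by (simpl; ring).
        apply Rpower_pow, Hh.
      * destruct (Req_EM_T 0 0); [reflexivity | congruence].
Qed.

Lemma is_dimH_exists (E : R -> Prop) :
  (exists s, 0 < s /\ Hausdorff_null s E) -> exists d, is_dimH E d.
Proof.
  intros [s0 [Hs0 Hn0]].
  destruct (completeness (fun y => 0 < - y /\ Hausdorff_null (- y) E)) as [L [HL1 HL2]].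
  - exists 0. intros y [Hy _]. lra.
  - exists (- s0). cbv beta. rewrite Ropp_involutive. auto.
  - exists (- L). split.
    + intros s Hs Hn. assert (HLs := HL1 (- s) ltac:(cbv beta; rewrite Ropp_involutive; auto)). lra.
    + intros d' Hd'. enough (L <= - d') by lra.
      apply HL2. intros y [Hy Hny]. specialize (Hd' (- y) Hy Hny). lra.
Qed.

Lemma floor_nat_spec x : 1 <= x -> (1 <= floor_nat x)%nat /\ INR (floor_nat x) <= x.
Proof.
  intros Hx. unfold floor_nat. destruct (base_Int_part x) as [H1 H2].
  assert (Hz : (0 < Int_part x)%Z) by (apply lt_IZR; lra).
  rewrite INR_IZR_INZ, Z2Nat.id by lia. split; [lia | exact H1].
Qed.

Theorem theorem1p1 (k : nat) (eps : R) (hk : (3 <= k)%nat)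
  (heps : 0 < eps <= / 12)
  (m : nat) (hm : is_rk k (floor_nat (/ (12 * eps))) m)
  (D : R) (hD : is_d k eps D) :
  ln (INR m) / ln (12 * INR (floor_nat (/ (12 * eps)))) <= D.
Proof.
  set (N := floor_nat (/ (12 * eps))) in *.
  destruct (floor_nat_spec (/ (12 * eps))) as [HN1 HN2].
  { rewrite <- Rinv_1. apply Rinv_le_contravar; lra. }
  fold N in HN1, HN2. apply le_INR in HN1. simpl in HN1.
  set (b := 12 * INR N).
  assert (Hb : 12 <= b) by (unfold b; lra).
  assert (Heb : eps * b <= 1).
  { apply (Rmult_le_compat_l (12 * eps)) in HN2; [| lra].
    rewrite Rinv_r in HN2 by lra. unfold b. lra. }
  destruct hm as [[A [[HD [HArange HAfree]] <-]] _].
  assert (HA : forall a, In a A -> (1 <= a)%nat /\ 12 * INR a <= b).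
  { intros a Ha. destruct (HArange a Ha) as [H1 H2]. apply le_INR in H2.
    unfold b. split; [exact H1 | lra]. }
  destruct (is_dimH_exists (digit_set b A)) as [d Hd].
  { exists 2. split; [lra |]. apply unit_interval_subset_null2, digit_set_range; auto. }
  apply Rle_trans with d.
  - apply (proj2 Hd). intros s Hs Hn. apply digit_set_dim_ge; auto.
  - apply (proj1 hD). exists (digit_set b A). split; [| split; [| exact Hd]].
    + exists 1. intros x Hx. apply Rabs_le. pose proof (digit_set_range b A Hb HA x Hx). lra.
    + apply digit_set_avoids_kAPs; auto; lra.
Qed.
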